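(* Let $p$ (true dynamics) and $\hat p$ (learned model) be dynamics kernels, and let $\pi_D$ (data-collecting policy) and $\pi$ be policies. Suppose $$\sup_{t\ge 0}\ \mathbb E_{s\sim d_t^{\pi_D},\,a\sim \pi_D(\cdot\mid s)}\Big[D_{TV}\big(p(\cdot\mid s,a),\hat p(\cdot\mid s,a)\big)\Big]\le \epsilon_m \qquad\text{and}\qquad \sup_{s\in\mathcal S} D_{TV}\big(\pi_D(\cdot\mid s),\pi(\cdot\mid s)\big)\le\epsilon_\pi .$$ Then, writing $\eta[\pi]=\eta(\pi,p)$ and $\hat\eta[\pi]=\eta(\pi,\hat p)$, $$\eta[\pi]\ \ge\ \hat\eta[\pi]-\frac{2\gamma r_{\max}(\epsilon_m+2\epsilon_\pi)}{(1-\gamma)^2}-\frac{4r_{\max}\epsilon_\pi}{1-\gamma}.$$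
   Context: Let $\mathcal S$ and $\mathcal A$ be countable (e.g. finite) state and action spaces, $\rho_0$ a probability distribution on $\mathcal S$ (initial state distribution), $\gamma\in(0,1)$ a discount factor, and $r:\mathcal S\times\mathcal A\to\mathbb R$ a reward function with $|r(s,a)|\le r_{\max}$ for all $(s,a)$. A policy is a Markov kernel $\pi(a\mid s)$ from $\mathcal S$ to $\mathcal A$; a dynamics kernel is a Markov kernel $q(s'\mid s,a)$ from $\mathcal S\times\mathcal A$ to $\mathcal S$. For a policy $\pi$ and dynamics $q$, the return is $\eta(\pi,q)=\sum_{t\ge0}\gamma^t\,\mathbb E[r(s_t,a_t)]$, where $s_0\sim\rho_0$, $a_t\sim\pi(\cdot\mid s_t)$, $s_{t+1}\sim q(\cdot\mid s_t,a_t)$. For probability distributions $\mu,\nu$ on a countable set, $D_{TV}(\mu,\nu)=\frac12\sum_x|\mu(x)-\nu(x)|$. Here $d_t^{\pi_D}$ denotes the distribution of $s_t$ when $s_0\sim\rho_0$, $a_i\sim\pi_D(\cdot\mid s_i)$, $s_{i+1}\sim p(\cdot\mid s_i,a_i)$ (the time-$t$ state marginal of $\pi_D$ under the true dynamics $p$). *)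

From Stdlib Require Import Reals ClassicalEpsilon.
From mathcomp Require Import ssreflect ssrfun ssrbool eqtype choice.

Open Scope R_scope.

Section Defs.
Variable T : countType.

(* The sequence n |-> f x if n encodes x, and 0 otherwise; it enumerates
   the values of f over the countable type T, each exactly once. *)
Definition enum_fun (f : T -> R) (n : nat) : R :=
  match @pickle_inv T n with Some x => f x | None => 0 end.

(* Sum over the countable set T (well defined for absolutely summable f;
   all sums used below are of this kind). *)
Definition csum (f : T -> R) : R :=
  epsilon (inhabits 0) (fun l => infinite_sum (enum_fun f) l).

Definition is_dist (mu : T -> R) : Prop :=
  (forall x, 0 <= mu x) /\ infinite_sum (enum_fun mu) 1.

Definition D_TV (mu nu : T -> R) : R :=
  / 2 * csum (fun x => Rabs (mu x - nu x)).
End Defs.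

Arguments csum {T}.
Arguments is_dist {T}.
Arguments D_TV {T}.

Section MDP.
Variables S A : countType.

(* policy pi(a|s) : S -> A -> R ; dynamics q(s'|s,a) : S -> A -> S -> R *)
Definition is_policy (pi : S -> A -> R) : Prop := forall s, is_dist (pi s).
Definition is_kernel (q : S -> A -> S -> R) : Prop :=
  forall s a, is_dist (q s a).

Fixpoint state_marg (rho0 : S -> R) (pi : S -> A -> R) (q : S -> A -> S -> R)
    (t : nat) : S -> R :=
  match t with
  | O => rho0
  | Datatypes.S t' => fun s' =>
      csum (fun s => state_marg rho0 pi q t' s *
                     csum (fun a => pi s a * q s a s'))
  end.

Definition expect_sa (d : S -> R) (pi : S -> A -> R) (f : S -> A -> R) : R :=
  csum (fun s => d s * csum (fun a => pi s a * f s a)).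

Definition ret (rho0 : S -> R) (gamma : R) (r : S -> A -> R)
    (pi : S -> A -> R) (q : S -> A -> S -> R) : R :=
  epsilon (inhabits 0) (fun l =>
    infinite_sum (fun t => gamma ^ t * expect_sa (state_marg rho0 pi q t) pi r) l).
End MDP.

Arguments is_policy {S A}.
Arguments is_kernel {S A}.
Arguments state_marg {S A}.
Arguments expect_sa {S A}.
Arguments ret {S A}.

From Stdlib Require Import Reals Lra FunctionalExtensionality ClassicalEpsilon Classical.
From mathcomp Require Import ssreflect ssrfun ssrbool eqtype choice.
From Coquelicot Require Import Coquelicot.
Open Scope R_scope.

(* The proof
   is a simulation argument along the reference chain (piD, p):
   - countable sums: linearity and monotonicity of [csum] on absolutely
     summable functions, and a Tonelli-type exchange bound [csum_swap_le];
   - distributions: L1 distance, total variation, and the mixing estimate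
     [l1dist_scaled] ||x mu - y nu||_1 <= |x - y| + y ||mu - nu||_1;
   - propagation: one step of the forward equation moves L1 distances by at
     most the expected policy disagreement plus the expected model error
     ([step_l1dist]); iterating gives a drift linear in t
     ([state_marg_drift]), and expected rewards differ by rmax times these
     quantities ([expect_sa_diff]);
   - discounting: the per-time bound rmax((2a+b)t + 2a) of
     [expected_reward_gap] is summed against gamma^t ([ret_gap_le]), which
     gives the two penalty terms of [theorem1]. *)

Lemma epsilon_infinite_sum (u : nat -> R) :
  ex_series u -> epsilon (inhabits 0) (fun l => infinite_sum u l) = Series u.
Proof.
move=> Hu.
have Hs : infinite_sum u (Series u) by apply/is_series_Reals; exact: Series_correct.
have /is_series_Reals H := epsilon_spec (inhabits 0) (fun l => infinite_sum u l)
  (ex_intro _ _ Hs).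
by rewrite (is_series_unique _ _ H).
Qed.

Lemma ex_series_zero : ex_series (fun _ : nat => 0).
Proof.
have Hg : ex_series (fun n => (/ 2) ^ n).
  by apply: ex_series_geom; rewrite Rabs_pos_eq; lra.
apply: ex_series_ext (ex_series_scal_l (V := R_NormedModule) 0 _ Hg) => n.
by rewrite /scal /= /mult /= Rmult_0_l.
Qed.

Section CountableSums.
Context {T : countType}.
Implicit Types f g : T -> R.

(* Absolute summability over the countable type [T]; on summable functions
   [csum] behaves like a genuine (order-independent) sum. *)
Definition summable f := ex_series (fun n => Rabs (enum_fun T f n)).

(* Partial sums of the enumeration of [f]; used to bound sums of
   nonnegative functions whose summability is not yet known. *)
Definition psum f (N : nat) := sum_n (enum_fun T f) N.

Lemma enum_fun_map1 (u : R -> R) f n : u 0 = 0 ->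
  enum_fun T (fun x => u (f x)) n = u (enum_fun T f n).
Proof. by rewrite /enum_fun; case: pickle_inv. Qed.

Lemma enum_fun_map2 (u : R -> R -> R) f g n : u 0 0 = 0 ->
  enum_fun T (fun x => u (f x) (g x)) n = u (enum_fun T f n) (enum_fun T g n).
Proof. by rewrite /enum_fun; case: pickle_inv. Qed.

Lemma enum_fun_nonneg f n : (forall x, 0 <= f x) -> 0 <= enum_fun T f n.
Proof. by rewrite /enum_fun; case: pickle_inv => [x|] H //; apply: Rle_refl. Qed.

Lemma csum_Series f : summable f -> csum f = Series (enum_fun T f).
Proof. by move=> /ex_series_Rabs Hf; rewrite /csum epsilon_infinite_sum. Qed.

Lemma summable_ext {f g} : (forall x, f x = g x) -> summable f -> summable g.
Proof. by move=> /functional_extensionality ->. Qed.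

Lemma summable_dom {f g} : (forall x, Rabs (f x) <= g x) -> summable g -> summable f.
Proof.
move=> Hfg; apply: ex_series_le => n; rewrite /norm /= /abs /= Rabs_Rabsolu /enum_fun.
case: pickle_inv => [x|]; last by rewrite Rabs_R0; apply: Rle_refl.
exact: Rle_trans (Hfg x) (Rle_abs _).
Qed.

Lemma summable0 : summable (fun _ => 0).
Proof.
apply: ex_series_ext ex_series_zero => n.
by rewrite /enum_fun; case: pickle_inv; rewrite Rabs_R0.
Qed.

Lemma summable_abs {f} : summable f -> summable (fun x => Rabs (f x)).
Proof.
apply: ex_series_ext => n.
by rewrite (enum_fun_map1 Rabs) ?Rabs_R0 // Rabs_Rabsolu.
Qed.

Lemma summable_plus {f g} : summable f -> summable g -> summable (fun x => f x + g x).
Proof.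
move=> Hf Hg; apply: (@summable_dom _ (fun x => Rabs (f x) + Rabs (g x))).
  by move=> x; apply: Rabs_triang.
apply: (ex_series_ext (fun n => plus (Rabs (enum_fun T f n)) (Rabs (enum_fun T g n)))).
  move=> n; rewrite (enum_fun_map2 (fun a b => Rabs a + Rabs b)) ?Rabs_R0 ?Rplus_0_r //.
  by rewrite [RHS]Rabs_pos_eq //; apply: Rplus_le_le_0_compat; apply: Rabs_pos.
exact: ex_series_plus.
Qed.

Lemma summable_scal c {f} : summable f -> summable (fun x => c * f x).
Proof.
move=> Hf; apply: (@summable_dom _ (fun x => Rabs c * Rabs (f x))).
  by move=> x; rewrite Rabs_mult; apply: Rle_refl.
apply: (ex_series_ext (fun n => scal (Rabs c) (Rabs (enum_fun T f n)))).
  move=> n; rewrite (enum_fun_map1 (fun a => Rabs c * Rabs a)) ?Rabs_R0 ?Rmult_0_r //.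
  by rewrite [RHS]Rabs_pos_eq //; apply: Rmult_le_pos; apply: Rabs_pos.
exact: ex_series_scal_l.
Qed.

Lemma summable_minus {f g} : summable f -> summable g -> summable (fun x => f x - g x).
Proof.
move=> Hf Hg; apply: summable_dom (summable_abs (summable_plus Hf (summable_scal (-1) Hg))).
by move=> x; right; f_equal; ring.
Qed.

Lemma csum_plus {f g} : summable f -> summable g ->
  csum (fun x => f x + g x) = csum f + csum g.
Proof.
move=> Hf Hg; have Hfg := summable_plus Hf Hg.
rewrite !csum_Series // -Series_plus; try exact: ex_series_Rabs.
by apply: Series_ext => n; rewrite (enum_fun_map2 Rplus) // Rplus_0_r.
Qed.

Lemma csum_scal c {f} : summable f -> csum (fun x => c * f x) = c * csum f.
Proof.
move=> Hf; have Hcf := summable_scal c Hf.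
rewrite !csum_Series // -Series_scal_l.
by apply: Series_ext => n; rewrite (enum_fun_map1 (Rmult c)) // Rmult_0_r.
Qed.

Lemma csum_ext {f g} : (forall x, f x = g x) -> csum f = csum g.
Proof. by move=> /functional_extensionality ->. Qed.

Lemma csum_minus {f g} : summable f -> summable g ->
  csum (fun x => f x - g x) = csum f - csum g.
Proof.
move=> Hf Hg.
have -> : csum (fun x => f x - g x) = csum (fun x => f x + -1 * g x).
  by apply: csum_ext => x; ring.
rewrite csum_plus ?csum_scal //; [ring | exact: summable_scal].
Qed.

Lemma csum0 : csum (fun _ : T => 0) = 0.
Proof. by have := csum_scal 0 summable0; rewrite !Rmult_0_l. Qed.

Lemma csum_nonneg {f} : summable f -> (forall x, 0 <= f x) -> 0 <= csum f.
Proof.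
move=> Hf H0; rewrite csum_Series //.
rewrite -(Rmult_0_l (Series (enum_fun T f))) -Series_scal_l.
apply: Series_le; last exact: ex_series_Rabs.
by move=> n; rewrite Rmult_0_l; split; [apply: Rle_refl | apply: enum_fun_nonneg].
Qed.

Lemma csum_le {f g} : summable f -> summable g -> (forall x, f x <= g x) ->
  csum f <= csum g.
Proof.
move=> Hf Hg Hfg.
have := csum_nonneg (summable_minus Hg Hf) (fun x => ltac:(have := Hfg x; lra)).
rewrite csum_minus //; lra.
Qed.

Lemma csum_abs_le {f g} : summable f -> summable g -> (forall x, Rabs (f x) <= g x) ->
  Rabs (csum f) <= csum g.
Proof.
move=> Hf Hg Hfg.
have Habs : Rabs (csum f) <= csum (fun x => Rabs (f x)).
  have Hf' := summable_abs Hf.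
  rewrite !csum_Series //; apply: Rle_trans (Series_Rabs _ Hf) _.
  by right; apply: Series_ext => n; rewrite (enum_fun_map1 Rabs) ?Rabs_R0.
exact: Rle_trans Habs (csum_le (summable_abs Hf) Hg Hfg).
Qed.

Lemma psum_le_csum {f g} N : summable g -> (forall x, 0 <= g x) ->
  (forall x, f x <= g x) -> psum f N <= csum g.
Proof.
move=> Hg Hg0 Hfg; rewrite csum_Series //.
have Hmono : forall n, enum_fun T f n <= enum_fun T g n.
  by move=> n; rewrite /enum_fun; case: pickle_inv => [x|] //; apply: Rle_refl.
apply: Rle_trans (_ : psum g N <= _).
  by elim: N => [|N IH]; rewrite /psum ?sum_O ?sum_Sn //; apply: Rplus_le_compat.
apply: is_lim_seq_incr_compare; first exact: (Series_correct _ (ex_series_Rabs _ Hg)).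
move=> n; rewrite /psum sum_Sn /plus /=.
have := enum_fun_nonneg g (S n) Hg0; lra.
Qed.

Lemma le_csum {f} x : summable f -> (forall y, 0 <= f y) -> f x <= csum f.
Proof.
move=> Hf Hf0; apply: Rle_trans (psum_le_csum (pickle x) Hf Hf0 (fun y => Rle_refl _)).
have Hx : enum_fun T f (pickle x) = f x by rewrite /enum_fun pickleK_inv.
rewrite /psum; case: (pickle x) Hx => [|n] Hx; first by rewrite sum_O Hx; apply: Rle_refl.
rewrite sum_Sn /plus /= Hx.
suff : 0 <= sum_n (enum_fun T f) n by lra.
elim: n {Hx} => [|n IH]; rewrite ?sum_O ?sum_Sn; first exact: enum_fun_nonneg.
by rewrite /plus /=; have := enum_fun_nonneg f (S n) Hf0; lra.
Qed.

Lemma bounded_summable {f} M : (forall x, 0 <= f x) -> (forall N, psum f N <= M) ->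
  summable f /\ csum f <= M.
Proof.
move=> Hf0 HM.
have Hincr : forall n, psum f n <= psum f (S n).
  by move=> n; rewrite /psum sum_Sn /plus /=; have := enum_fun_nonneg f (S n) Hf0; lra.
have [l Hl] := ex_finite_lim_seq_incr _ M Hincr HM.
have Hf : summable f.
  apply: (ex_series_ext (enum_fun T f)); last by exists l.
  by move=> n; rewrite Rabs_pos_eq //; apply: enum_fun_nonneg.
split=> //; rewrite csum_Series //.
have Hlim : is_lim_seq (psum f) (Series (enum_fun T f)) :=
  Series_correct _ (ex_series_Rabs _ Hf).
by have := is_lim_seq_le _ _ _ _ HM Hlim (is_lim_seq_const M).
Qed.

Lemma weighted_sum_bound {w g M} : (forall x, 0 <= w x) -> summable w -> 0 <= M ->
  (forall x, Rabs (g x) <= M) ->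
  summable (fun x => w x * g x) /\ Rabs (csum (fun x => w x * g x)) <= M * csum w.
Proof.
move=> Hw0 Hw HM Hg.
have Hdom : forall x, Rabs (w x * g x) <= M * w x.
  move=> x; rewrite Rabs_mult Rabs_pos_eq // Rmult_comm.
  exact: Rmult_le_compat_r (Hw0 x) (Hg x).
have HMw := summable_scal M Hw.
split; first exact: summable_dom Hdom HMw.
by rewrite -csum_scal //; apply: csum_abs_le (summable_dom Hdom HMw) HMw Hdom.
Qed.

End CountableSums.

Lemma psum_csum {T U : countType} (F : U -> T -> R) N :
  (forall y, summable (F y)) ->
  summable (fun x => psum (fun y => F y x) N) /\
  psum (fun y => csum (F y)) N = csum (fun x => psum (fun y => F y x) N).
Proof.
move=> HF.
have Hn : forall n, enum_fun U (fun y => csum (F y)) n =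
                    csum (fun x => enum_fun U (fun y => F y x) n).
  by move=> n; rewrite /enum_fun; case: pickle_inv => [y|] //; rewrite csum0.
have Sn : forall n, summable (fun x => enum_fun U (fun y => F y x) n).
  by move=> n; rewrite /enum_fun; case: pickle_inv => [y|] //; apply: summable0.
rewrite /psum; elim: N => [|N [IHs IHe]].
  have -> : (fun x => sum_n (enum_fun U (fun y => F y x)) 0) =
            (fun x => enum_fun U (fun y => F y x) 0).
    by apply: functional_extensionality => x; rewrite sum_O.
  by rewrite sum_O Hn.
have -> : (fun x => sum_n (enum_fun U (fun y => F y x)) (S N)) =
          (fun x => sum_n (enum_fun U (fun y => F y x)) N + enum_fun U (fun y => F y x) (S N)).
  by apply: functional_extensionality => x; rewrite sum_Sn.
rewrite sum_Sn /plus /= IHe Hn -csum_plus //.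
by split=> //; apply: summable_plus.
Qed.

Lemma csum_swap_le {T U : countType} (F : U -> T -> R) (B : T -> R) :
  (forall y x, 0 <= F y x) -> (forall y, summable (F y)) -> summable B ->
  (forall x N, psum (fun y => F y x) N <= B x) ->
  summable (fun y => csum (F y)) /\ csum (fun y => csum (F y)) <= csum B.
Proof.
move=> HF0 HF HB HcolB; apply: bounded_summable.
  by move=> y; apply: csum_nonneg.
move=> N; have [Hs ->] := psum_csum F N HF.
exact: csum_le Hs HB (fun x => HcolB x N).
Qed.

Section Distributions.
Context {T : countType}.
Implicit Types mu nu w : T -> R.

Definition l1dist mu nu := csum (fun x => Rabs (mu x - nu x)).

(* Stated with swapped arguments, which is how it is used for both the policy
   and the model terms. *)
Lemma l1dist_D_TV mu nu : l1dist mu nu = 2 * D_TV nu mu.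
Proof.
rewrite /D_TV -/(l1dist nu mu).
have -> : l1dist mu nu = l1dist nu mu by apply: csum_ext => x; apply: Rabs_minus_sym.
lra.
Qed.

Definition subdist w := (forall x, 0 <= w x) /\ summable w /\ csum w <= 1.

Lemma is_dist_props {mu} : is_dist mu ->
  (forall x, 0 <= mu x) /\ summable mu /\ csum mu = 1.
Proof.
move=> [Hmu0 /is_series_Reals Hmu].
have Hs : summable mu.
  apply: (ex_series_ext (enum_fun T mu)); last by exists 1.
  by move=> n; rewrite Rabs_pos_eq //; apply: enum_fun_nonneg.
by split=> //; split=> //; rewrite csum_Series //; apply: is_series_unique.
Qed.

Lemma dist_subdist {mu} : is_dist mu -> subdist mu.
Proof.
move=> /is_dist_props [Hmu0 [Hmu Hmass]].
by split=> //; split=> //; rewrite Hmass; apply: Rle_refl.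
Qed.

Lemma dist_le1 {mu} x : is_dist mu -> 0 <= mu x <= 1.
Proof.
move=> /is_dist_props [Hmu0 [Hmu Hmass]]; split=> //.
by rewrite -Hmass; apply: le_csum.
Qed.

Lemma dist_inhabited {mu} : is_dist mu -> inhabited T.
Proof.
move=> /is_dist_props [_ [_ Hmass]]; apply: NNPP => Hempty.
have Hzero : csum mu = csum (fun _ : T => 0).
  by apply: csum_ext => x; case: Hempty; constructor.
by move: Hmass; rewrite Hzero csum0; lra.
Qed.

Lemma subdist_avg_bound {w g M} : subdist w -> 0 <= M -> (forall x, Rabs (g x) <= M) ->
  summable (fun x => w x * g x) /\ Rabs (csum (fun x => w x * g x)) <= M.
Proof.
move=> [Hw0 [Hw Hmass]] HM Hg.
have [Hs Hb] := weighted_sum_bound Hw0 Hw HM Hg.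
by split=> //; apply: Rle_trans Hb _; rewrite -{2}(Rmult_1_r M); apply: Rmult_le_compat_l.
Qed.

Lemma l1dist_summable {mu nu} : summable mu -> summable nu ->
  summable (fun x => Rabs (mu x - nu x)).
Proof. by move=> Hmu Hnu; apply/summable_abs/summable_minus. Qed.

Lemma l1dist_bounds {mu nu} : is_dist mu -> is_dist nu -> 0 <= l1dist mu nu <= 2.
Proof.
move=> /is_dist_props [Hmu0 [Hmu Hmu1]] /is_dist_props [Hnu0 [Hnu Hnu1]].
have Hdom : forall x, Rabs (mu x - nu x) <= mu x + nu x.
  move=> x; apply: Rle_trans (Rabs_triang _ _) _.
  by rewrite Rabs_Ropp !Rabs_pos_eq //; apply: Rle_refl.
have Habs := l1dist_summable Hmu Hnu.
split; first by apply: csum_nonneg Habs _ => x; apply: Rabs_pos.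
have := csum_le Habs (summable_plus Hmu Hnu) Hdom.
by rewrite csum_plus // Hmu1 Hnu1 /l1dist; lra.
Qed.

Lemma l1dist_abs_le {mu nu} : is_dist mu -> is_dist nu -> Rabs (l1dist mu nu) <= 2.
Proof. by move=> Hmu Hnu; have [? ?] := l1dist_bounds Hmu Hnu; rewrite Rabs_pos_eq. Qed.

Lemma D_TV_bounds {mu nu} : is_dist mu -> is_dist nu -> 0 <= D_TV mu nu <= 1.
Proof.
move=> Hmu Hnu; have := l1dist_bounds Hnu Hmu.
by rewrite l1dist_D_TV; lra.
Qed.

Lemma l1dist_self mu : l1dist mu mu = 0.
Proof. by rewrite -(csum0 (T:=T)); apply: csum_ext => x; rewrite Rminus_diag Rabs_R0. Qed.

Lemma l1dist_scaled x y {mu nu} : is_dist mu -> is_dist nu -> 0 <= y ->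
  summable (fun z => Rabs (x * mu z - y * nu z)) /\
  l1dist (fun z => x * mu z) (fun z => y * nu z) <= Rabs (x - y) + y * l1dist mu nu.
Proof.
move=> Hmu_d Hnu_d Hy.
have [Hmu0 [Hmu Hmu1]] := is_dist_props Hmu_d.
have [_ [Hnu _]] := is_dist_props Hnu_d.
have Habs := l1dist_summable Hmu Hnu.
have Hdom : forall z, Rabs (x * mu z - y * nu z) <=
                      Rabs (x - y) * mu z + y * Rabs (mu z - nu z).
  move=> z; have -> : x * mu z - y * nu z = (x - y) * mu z + y * (mu z - nu z) by ring.
  apply: Rle_trans (Rabs_triang _ _) _.
  by rewrite !Rabs_mult (Rabs_pos_eq (mu z)) // (Rabs_pos_eq y) //; apply: Rle_refl.
have Hbound := summable_plus (summable_scal (Rabs (x - y)) Hmu) (summable_scal y Habs).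
have Hs := l1dist_summable (summable_scal x Hmu) (summable_scal y Hnu).
split=> //; apply: Rle_trans (csum_le Hs Hbound Hdom) _.
rewrite csum_plus; try exact: summable_scal.
by rewrite !csum_scal // Hmu1 Rmult_1_r; apply: Rle_refl.
Qed.

Lemma psum_scaled_subdist_le {w} c N : subdist w -> 0 <= c ->
  psum (fun x => c * w x) N <= c.
Proof.
move=> [Hw0 [Hw Hmass]] Hc.
apply: Rle_trans (psum_le_csum N (summable_scal c Hw) _ (fun x => Rle_refl _)) _.
  by move=> x; apply: Rmult_le_pos.
by rewrite csum_scal //; rewrite -{2}(Rmult_1_r c); apply: Rmult_le_compat_l.
Qed.

End Distributions.

Section Propagation.
Context {St Ac : countType}.
Implicit Types (d : St -> R) (pi : St -> Ac -> R) (q : St -> Ac -> St -> R).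

Definition trans pi q s s' := csum (fun a => pi s a * q s a s').

Definition step d pi q s' := csum (fun s => d s * trans pi q s s').

Definition policy_gap d pi pi' := csum (fun s => d s * l1dist (pi s) (pi' s)).
Definition model_gap d pi q q' :=
  csum (fun s => d s * csum (fun a => pi s a * l1dist (q s a) (q' s a))).

Lemma trans_props {pi q} s s' : is_policy pi -> is_kernel q ->
  summable (fun a => pi s a * q s a s') /\ 0 <= trans pi q s s' <= 1.
Proof.
move=> Hpi Hq.
have Hq1 : forall a, Rabs (q s a s') <= 1.
  by move=> a; have := dist_le1 s' (Hq s a) => [[? ?]]; rewrite Rabs_pos_eq.
have [Hs Hb] := subdist_avg_bound (dist_subdist (Hpi s)) Rle_0_1 Hq1.
split=> //; split; last by apply: Rle_trans (Rle_abs _) Hb.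
apply: csum_nonneg Hs _ => a.
apply: Rmult_le_pos; first exact: (proj1 (dist_le1 a (Hpi s))).
exact: (proj1 (dist_le1 s' (Hq s a))).
Qed.

Lemma trans_subdist {pi q} s : is_policy pi -> is_kernel q -> subdist (trans pi q s).
Proof.
move=> Hpi Hq.
have [Hpi0 [Hpis Hpi1]] := is_dist_props (Hpi s).
have [Hs Hb] : summable (trans pi q s) /\ csum (trans pi q s) <= csum (pi s).
  apply: (csum_swap_le (fun s' a => pi s a * q s a s')).
  - by move=> s' a; apply: Rmult_le_pos; [apply: Hpi0 | exact: (proj1 (dist_le1 s' (Hq s a)))].
  - by move=> s'; case: (trans_props s s' Hpi Hq).
  - exact: Hpis.
  - by move=> a N; apply: psum_scaled_subdist_le (dist_subdist (Hq s a)) (Hpi0 a).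
split; first by move=> s'; case: (trans_props s s' Hpi Hq) => _ [].
by split=> //; rewrite -Hpi1.
Qed.

Lemma step_summand {d pi q} s' : subdist d -> is_policy pi -> is_kernel q ->
  summable (fun s => d s * trans pi q s s').
Proof.
move=> Hd Hpi Hq.
have Htr1 : forall s, Rabs (trans pi q s s') <= 1.
  by move=> s; have [_ [? ?]] := trans_props s s' Hpi Hq; rewrite Rabs_pos_eq.
by case: (subdist_avg_bound Hd Rle_0_1 Htr1).
Qed.

Lemma step_subdist {d pi q} : subdist d -> is_policy pi -> is_kernel q ->
  subdist (step d pi q).
Proof.
move=> Hd Hpi Hq; have [Hd0 [Hds Hd1]] := Hd.
have Htr0 : forall s s', 0 <= d s * trans pi q s s'.
  by move=> s s'; apply: Rmult_le_pos (Hd0 s) _; case: (trans_props s s' Hpi Hq) => _ [].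
have [Hs Hb] := csum_swap_le (fun s' s => d s * trans pi q s s') d
  (fun s' s => Htr0 s s') (fun s' => step_summand s' Hd Hpi Hq) Hds
  (fun s N => psum_scaled_subdist_le (d s) N (trans_subdist s Hpi Hq) (Hd0 s)).
split; first by move=> s'; apply: csum_nonneg (step_summand s' Hd Hpi Hq) _.
by split=> //; apply: Rle_trans Hb Hd1.
Qed.

Lemma state_marg_subdist {rho0 pi q} t : is_dist rho0 -> is_policy pi -> is_kernel q ->
  subdist (state_marg rho0 pi q t).
Proof.
move=> Hrho Hpi Hq; elim: t => [|t IH]; first exact: dist_subdist.
exact: (step_subdist IH Hpi Hq).
Qed.

Lemma model_error_bound {pi q q'} s : is_policy pi -> is_kernel q -> is_kernel q' ->
  summable (fun a => pi s a * l1dist (q s a) (q' s a)) /\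
  Rabs (csum (fun a => pi s a * l1dist (q s a) (q' s a))) <= 2.
Proof.
move=> Hpi Hq Hq'.
apply: (subdist_avg_bound (dist_subdist (Hpi s))); first lra.
by move=> a; apply: l1dist_abs_le.
Qed.

Lemma trans_diff_le {d d' pi pi' q q'} s s' :
  is_policy pi -> is_policy pi' -> is_kernel q -> is_kernel q' ->
  Rabs (d s * trans pi q s s' - d' s * trans pi' q' s s') <=
  csum (fun a => Rabs (d s * pi s a * q s a s' - d' s * pi' s a * q' s a s')).
Proof.
move=> Hpi Hpi' Hq Hq'.
have [Htr _] := trans_props s s' Hpi Hq; have [Htr' _] := trans_props s s' Hpi' Hq'.
have Hassoc : forall c (u : Ac -> R) (v : Ac -> R), summable (fun a => u a * v a) ->
    summable (fun a => c * u a * v a).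
  by move=> c u v /(summable_scal c); apply: summable_ext => a; rewrite Rmult_assoc.
have HK := summable_minus (Hassoc (d s) _ _ Htr) (Hassoc (d' s) _ _ Htr').
rewrite /trans -!csum_scal // -csum_minus; try exact: summable_scal.
apply: csum_abs_le (summable_abs HK) _ => [|a].
  by apply: summable_ext HK => a; rewrite !Rmult_assoc.
by rewrite !Rmult_assoc; apply: Rle_refl.
Qed.

Lemma step_column_bound {d d' pi pi' q q'} s : 0 <= d' s ->
  is_policy pi -> is_policy pi' -> is_kernel q -> is_kernel q' ->
  summable (fun s' => csum (fun a =>
    Rabs (d s * pi s a * q s a s' - d' s * pi' s a * q' s a s'))) /\
  csum (fun s' => csum (fun a =>
    Rabs (d s * pi s a * q s a s' - d' s * pi' s a * q' s a s'))) <=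
  Rabs (d s - d' s) + d' s * l1dist (pi s) (pi' s)
  + d' s * csum (fun a => pi' s a * l1dist (q s a) (q' s a)).
Proof.
move=> Hd's Hpi Hpi' Hq Hq'.
have [Hpi'0 _] := is_dist_props (Hpi' s).
have [Hmix Hmix_le] := l1dist_scaled (d s) (d' s) (Hpi s) (Hpi' s) Hd's.
have [Hmodel _] := model_error_bound s Hpi' Hq Hq'.
have Hrows : forall s', summable (fun a =>
    Rabs (d s * pi s a * q s a s' - d' s * pi' s a * q' s a s')).
  move=> s'; have [Htr _] := trans_props s s' Hpi Hq.
  have [Htr' _] := trans_props s s' Hpi' Hq'.
  apply/summable_abs/summable_minus.
    by apply: summable_ext (summable_scal (d s) Htr) => a; rewrite Rmult_assoc.
  by apply: summable_ext (summable_scal (d' s) Htr') => a; rewrite Rmult_assoc.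
have Hcols : forall a N,
    psum (fun s' => Rabs (d s * pi s a * q s a s' - d' s * pi' s a * q' s a s')) N
    <= Rabs (d s * pi s a - d' s * pi' s a) + d' s * (pi' s a * l1dist (q s a) (q' s a)).
  move=> a N; have Hy : 0 <= d' s * pi' s a by apply: Rmult_le_pos.
  have [Hcol Hcol_le] := l1dist_scaled (d s * pi s a) (d' s * pi' s a) (Hq s a) (Hq' s a) Hy.
  apply: Rle_trans (psum_le_csum N Hcol (fun s' => Rabs_pos _) (fun s' => Rle_refl _)) _.
  by apply: Rle_trans Hcol_le _; rewrite Rmult_assoc; apply: Rle_refl.
have [Hs Hb] := csum_swap_le _ _ (fun s' a => Rabs_pos _) Hrows
  (summable_plus Hmix (summable_scal (d' s) Hmodel)) Hcols.
split=> //; apply: Rle_trans Hb _.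
rewrite csum_plus ?csum_scal //; last exact: summable_scal.
by rewrite /l1dist in Hmix_le |- *; lra.
Qed.

Lemma step_l1dist {d d' pi pi' q q'} :
  subdist d -> subdist d' -> is_policy pi -> is_policy pi' -> is_kernel q -> is_kernel q' ->
  l1dist (step d pi q) (step d' pi' q')
  <= l1dist d d' + policy_gap d' pi pi' + model_gap d' pi' q q'.
Proof.
move=> Hd Hd' Hpi Hpi' Hq Hq'.
have [Hd0 [Hds _]] := Hd; have [Hd'0 [Hd's _]] := Hd'.
pose F s' s := Rabs (d s * trans pi q s s' - d' s * trans pi' q' s s').
have Hrows : forall s', summable (F s').
  by move=> s'; apply: l1dist_summable; apply: step_summand.
have Hpol : summable (fun s => d' s * l1dist (pi s) (pi' s)).
  by case: (weighted_sum_bound Hd'0 Hd's (Rlt_le 0 2 Rlt_0_2)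
              (fun s => l1dist_abs_le (Hpi s) (Hpi' s))).
have Hmod : summable (fun s => d' s * csum (fun a => pi' s a * l1dist (q s a) (q' s a))).
  by case: (weighted_sum_bound Hd'0 Hd's (Rlt_le 0 2 Rlt_0_2)
              (fun s => proj2 (model_error_bound s Hpi' Hq Hq'))).
have HB := summable_plus (summable_plus (l1dist_summable Hds Hd's) Hpol) Hmod.
have Hcols : forall s N, psum (fun s' => F s' s) N <=
    Rabs (d s - d' s) + d' s * l1dist (pi s) (pi' s)
    + d' s * csum (fun a => pi' s a * l1dist (q s a) (q' s a)).
  move=> s N; have [Hcol Hcol_le] := step_column_bound (d := d) s (Hd'0 s) Hpi Hpi' Hq Hq'.
  have Hdiff := fun s' => trans_diff_le (d := d) (d' := d') s s' Hpi Hpi' Hq Hq'.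
  apply: Rle_trans Hcol_le.
  exact: psum_le_csum N Hcol (fun s' => Rle_trans _ _ _ (Rabs_pos _) (Hdiff s')) Hdiff.
have [HsF HbF] := csum_swap_le F _ (fun s' s => Rabs_pos _) Hrows HB Hcols.
have Hpoint : forall s', Rabs (step d pi q s' - step d' pi' q' s') <= csum (F s').
  move=> s'; rewrite /step -csum_minus; try exact: step_summand.
  apply: csum_abs_le (Hrows s') _ => [|s]; last exact: Rle_refl.
  by apply: summable_minus; apply: step_summand.
rewrite {1}/l1dist.
apply: Rle_trans (csum_le (summable_abs (summable_dom Hpoint HsF)) HsF Hpoint) _.
apply: Rle_trans HbF _.
rewrite csum_plus //; last exact: summable_plus (l1dist_summable Hds Hd's) Hpol.
by rewrite csum_plus //; [apply: Rle_refl | exact: l1dist_summable].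
Qed.

Lemma policy_gap_le {d pi pi'} e : subdist d -> is_policy pi -> is_policy pi' ->
  0 <= e -> (forall s, l1dist (pi s) (pi' s) <= e) -> policy_gap d pi pi' <= e.
Proof.
move=> Hd Hpi Hpi' He0 He.
have Habs : forall s, Rabs (l1dist (pi s) (pi' s)) <= e.
  by move=> s; have [? _] := l1dist_bounds (Hpi s) (Hpi' s); rewrite Rabs_pos_eq.
by have [_ Hb] := subdist_avg_bound Hd He0 Habs; apply: Rle_trans (Rle_abs _) Hb.
Qed.

Lemma model_gap_expect {d pi q q'} : subdist d -> is_policy pi -> is_kernel q -> is_kernel q' ->
  model_gap d pi q q' = 2 * expect_sa d pi (fun s a => D_TV (q' s a) (q s a)).
Proof.
move=> Hd Hpi Hq Hq'.
have HTV1 : forall s a, Rabs (D_TV (q' s a) (q s a)) <= 1.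
  by move=> s a; have [? ?] := D_TV_bounds (Hq' s a) (Hq s a); rewrite Rabs_pos_eq.
have Hin : forall s, summable (fun a => pi s a * D_TV (q' s a) (q s a)) /\
                     Rabs (csum (fun a => pi s a * D_TV (q' s a) (q s a))) <= 1.
  by move=> s; apply: (subdist_avg_bound (dist_subdist (Hpi s)) Rle_0_1 (HTV1 s)).
have [Hout _] := subdist_avg_bound Hd Rle_0_1 (fun s => proj2 (Hin s)).
rewrite /expect_sa -csum_scal //; apply: csum_ext => s.
rewrite (_ : csum _ = 2 * csum (fun a => pi s a * D_TV (q' s a) (q s a))); first ring.
by rewrite -csum_scal; [apply: csum_ext => a; rewrite l1dist_D_TV; ring | case: (Hin s)].
Qed.

Lemma model_gap_self d pi q : model_gap d pi q q = 0.
Proof.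
rewrite -(csum0 (T := St)); apply: csum_ext => s.
have -> : csum (fun a => pi s a * l1dist (q s a) (q s a)) = csum (fun _ : Ac => 0).
  by apply: csum_ext => a; rewrite l1dist_self Rmult_0_r.
by rewrite csum0 Rmult_0_r.
Qed.

Lemma expect_sa_diff {d d' pi pi' f} M :
  subdist d -> subdist d' -> is_policy pi -> is_policy pi' -> 0 <= M ->
  (forall s a, Rabs (f s a) <= M) ->
  Rabs (expect_sa d pi f - expect_sa d' pi' f) <= M * (l1dist d d' + policy_gap d' pi pi').
Proof.
move=> Hd Hd' Hpi Hpi' HM Hf.
have [Hd0 [Hds _]] := Hd; have [Hd'0 [Hd's _]] := Hd'.
have Havg : forall pi0, is_policy pi0 -> forall s,
    summable (fun a => pi0 s a * f s a) /\ Rabs (csum (fun a => pi0 s a * f s a)) <= M.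
  by move=> pi0 Hpi0 s; apply: subdist_avg_bound (dist_subdist (Hpi0 s)) HM (Hf s).
have Havg_diff : forall s, Rabs (csum (fun a => pi s a * f s a) - csum (fun a => pi' s a * f s a))
                           <= M * l1dist (pi s) (pi' s).
  move=> s; have [Hs _] := Havg _ Hpi s; have [Hs' _] := Havg _ Hpi' s.
  have [_ [Hpis _]] := is_dist_props (Hpi s); have [_ [Hpi's _]] := is_dist_props (Hpi' s).
  rewrite -csum_minus // /l1dist -csum_scal; last exact: l1dist_summable.
  apply: csum_abs_le (summable_minus Hs Hs') (summable_scal M (l1dist_summable Hpis Hpi's)) _.
  move=> a; rewrite -Rmult_minus_distr_r Rabs_mult Rmult_comm.
  exact: Rmult_le_compat_r (Rabs_pos _) (Hf s a).
have [Hpol _] := weighted_sum_bound Hd'0 Hd's (Rlt_le 0 2 Rlt_0_2)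
                   (fun s => l1dist_abs_le (Hpi s) (Hpi' s)).
have Hbound := summable_plus (summable_scal M (l1dist_summable Hds Hd's)) (summable_scal M Hpol).
have [HX _] := subdist_avg_bound Hd HM (fun s => proj2 (Havg _ Hpi s)).
have [HX' _] := subdist_avg_bound Hd' HM (fun s => proj2 (Havg _ Hpi' s)).
rewrite /expect_sa -csum_minus //.
apply: Rle_trans (csum_abs_le (summable_minus HX HX') Hbound _) _.
  move=> s; set X := csum _; set X' := csum _.
  have -> : d s * X - d' s * X' = (d s - d' s) * X + d' s * (X - X') by ring.
  apply: Rle_trans (Rabs_triang _ _) _; rewrite !Rabs_mult (Rabs_pos_eq (d' s)) //.
  apply: Rplus_le_compat.
    by rewrite (Rmult_comm M); apply: Rmult_le_compat_l (Rabs_pos _) (proj2 (Havg _ Hpi s)).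
  rewrite (Rmult_comm M) Rmult_assoc; apply: Rmult_le_compat_l (Hd'0 s) _.
  by rewrite Rmult_comm; apply: Havg_diff.
rewrite (csum_plus (summable_scal M (l1dist_summable Hds Hd's)) (summable_scal M Hpol)).
rewrite !csum_scal //; last exact: l1dist_summable.
by rewrite -Rmult_plus_distr_l; apply: Rle_refl.
Qed.

Lemma state_marg_drift {rho0 pi piD q p} a b :
  is_dist rho0 -> is_policy pi -> is_policy piD -> is_kernel q -> is_kernel p ->
  (forall t, policy_gap (state_marg rho0 piD p t) pi piD <= a) ->
  (forall t, model_gap (state_marg rho0 piD p t) piD q p <= b) ->
  forall t, l1dist (state_marg rho0 pi q t) (state_marg rho0 piD p t) <= INR t * (a + b).
Proof.
move=> Hrho Hpi HpiD Hq Hp Ha Hb; elim=> [|t IH].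
  by rewrite l1dist_self /= Rmult_0_l; apply: Rle_refl.
apply: Rle_trans (step_l1dist (state_marg_subdist t Hrho Hpi Hq)
  (state_marg_subdist t Hrho HpiD Hp) Hpi HpiD Hq Hp) _.
by rewrite S_INR; have := Ha t; have := Hb t; lra.
Qed.

End Propagation.

Section Expectations.
Context {St Ac : countType}.
Implicit Types (d : St -> R) (pi : St -> Ac -> R) (f : St -> Ac -> R).

Lemma expect_sa_summable {d pi f} M : subdist d -> is_policy pi -> 0 <= M ->
  (forall s a, Rabs (f s a) <= M) ->
  (forall s, summable (fun a => pi s a * f s a)) /\
  summable (fun s => d s * csum (fun a => pi s a * f s a)) /\
  Rabs (expect_sa d pi f) <= M.
Proof.
move=> Hd Hpi HM Hf.
have Hin := fun s => subdist_avg_bound (dist_subdist (Hpi s)) HM (Hf s).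
have [Hout Hb] := subdist_avg_bound Hd HM (fun s => proj2 (Hin s)).
by split; first by move=> s; case: (Hin s).
Qed.

Lemma expect_sa_nonneg {d pi f} M : subdist d -> is_policy pi -> 0 <= M ->
  (forall s a, 0 <= f s a <= M) -> 0 <= expect_sa d pi f.
Proof.
move=> Hd Hpi HM Hf; have [Hd0 _] := Hd.
have Hf' : forall s a, Rabs (f s a) <= M.
  by move=> s a; have [? ?] := Hf s a; rewrite Rabs_pos_eq.
have [Hin [Hout _]] := expect_sa_summable M Hd Hpi HM Hf'.
apply: csum_nonneg Hout _ => s; apply: Rmult_le_pos (Hd0 s) _.
apply: csum_nonneg (Hin s) _ => a; apply: Rmult_le_pos (proj1 (Hf s a)).
by have [Hpi0 _] := is_dist_props (Hpi s).
Qed.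

(* Comparison of two state-action distributions that share the policy [pi]
   through a reference pair (dref, piref): the triangle inequality combined with
   [expect_sa_diff] on each side. *)
Lemma expect_sa_gap_via_reference {d1 d2 dref pi piref f} M delta1 delta2 kappa :
  subdist d1 -> subdist d2 -> subdist dref -> is_policy pi -> is_policy piref -> 0 <= M ->
  (forall s a, Rabs (f s a) <= M) ->
  l1dist d1 dref <= delta1 -> l1dist d2 dref <= delta2 -> policy_gap dref pi piref <= kappa ->
  expect_sa d2 pi f - expect_sa d1 pi f <= M * (delta1 + delta2 + 2 * kappa).
Proof.
move=> Hd1 Hd2 Hdref Hpi Hpiref HM Hf H1 H2 Hk.
have G1 := expect_sa_diff M Hd1 Hdref Hpi Hpiref HM Hf.
have G2 := expect_sa_diff M Hd2 Hdref Hpi Hpiref HM Hf.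
have B1 : M * (l1dist d1 dref + policy_gap dref pi piref) <= M * (delta1 + kappa).
  by apply: Rmult_le_compat_l HM _; lra.
have B2 : M * (l1dist d2 dref + policy_gap dref pi piref) <= M * (delta2 + kappa).
  by apply: Rmult_le_compat_l HM _; lra.
have := Rle_abs (expect_sa d2 pi f - expect_sa dref piref f).
have := Rle_abs (- (expect_sa d1 pi f - expect_sa dref piref f)); rewrite Rabs_Ropp.
lra.
Qed.

End Expectations.

Lemma discounted_linear_sum (g alpha beta : R) N : g <> 1 ->
  sum_n (fun t => g ^ t * (alpha * INR t + beta)) N =
  alpha * ((g - INR (S N) * g ^ S N + INR N * g ^ S (S N)) / (1 - g) ^ 2)
  + beta * ((1 - g ^ S N) / (1 - g)).
Proof.
move=> Hg; have Hg' : 1 - g <> 0 by lra.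
(* [sum_n] lives in an abelian group; [field] needs the equation stated in R. *)
have HR : forall x y : R, x = y -> x = y by [].
elim: N => [|N IH]; first by rewrite sum_O /=; apply: HR; field.
have Hplus : forall x y : R, plus x y = x + y by [].
rewrite sum_Sn IH Hplus !S_INR -!tech_pow_Rmult.
by apply: HR; field.
Qed.

Lemma discounted_linear_sum_le (g alpha beta : R) N : 0 < g < 1 -> 0 <= alpha -> 0 <= beta ->
  sum_n (fun t => g ^ t * (alpha * INR t + beta)) N <=
  alpha * g / (1 - g) ^ 2 + beta / (1 - g).
Proof.
move=> Hg Ha Hb; rewrite discounted_linear_sum; last lra.
have HgN : 0 <= g ^ S N by apply: pow_le; lra.
have Hsq : 0 < (1 - g) ^ 2 by apply: pow_lt; lra.
have Hlin : g - INR (S N) * g ^ S N + INR N * g ^ S (S N) <= g.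
  have HN : 0 <= INR N * g ^ S N * (1 - g).
    by apply: Rmult_le_pos; [apply: Rmult_le_pos; [apply: pos_INR | done] | lra].
  by rewrite S_INR -(tech_pow_Rmult g (S N)); lra.
have Hinv2 := Rlt_le _ _ (Rinv_0_lt_compat _ Hsq).
have Hinv1 : 0 <= / (1 - g) by apply: Rlt_le; apply: Rinv_0_lt_compat; lra.
have H1 := Rmult_le_compat_l _ _ _ Ha (Rmult_le_compat_r _ _ _ Hinv2 Hlin).
have H2 : 1 - g ^ S N <= 1 by lra.
have := Rmult_le_compat_l _ _ _ Hb (Rmult_le_compat_r _ _ _ Hinv1 H2).
rewrite /Rdiv in H1 |- *; lra.
Qed.

Lemma Series_ge_partial (u : nat -> R) m : ex_series u -> (forall N, m <= sum_n u N) ->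
  m <= Series u.
Proof.
move=> Hu Hm; have Hlim : is_lim_seq (sum_n u) (Series u) := Series_correct _ Hu.
by have := is_lim_seq_le _ _ _ _ Hm (is_lim_seq_const m) Hlim.
Qed.

Lemma ex_series_discounted (g M : R) (u : nat -> R) : 0 <= g < 1 ->
  (forall t, Rabs (u t) <= M) -> ex_series (fun t => g ^ t * u t).
Proof.
move=> Hg Hu; apply: (ex_series_le _ (fun t => M * g ^ t)).
  move=> t; have Hgt : 0 <= g ^ t by apply: pow_le; lra.
  rewrite /norm /= /abs /= Rabs_mult (Rabs_pos_eq _ Hgt) Rmult_comm.
  exact: Rmult_le_compat_r Hgt (Hu t).
apply: (ex_series_scal_l (V := R_NormedModule) M); apply: ex_series_geom.
by rewrite Rabs_pos_eq; lra.
Qed.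

Lemma Series_gap_le (u v : nat -> R) (g alpha beta : R) :
  ex_series u -> ex_series v -> 0 < g < 1 -> 0 <= alpha -> 0 <= beta ->
  (forall t, v t - u t <= g ^ t * (alpha * INR t + beta)) ->
  Series v - Series u <= alpha * g / (1 - g) ^ 2 + beta / (1 - g).
Proof.
move=> Hu Hv Hg Ha Hb Hgap.
have Hw : ex_series (fun t => u t - v t).
  by apply: (ex_series_ext (fun t => plus (u t) (opp (v t)))) => //; apply: ex_series_minus.
suff : - (alpha * g / (1 - g) ^ 2 + beta / (1 - g)) <= Series (fun t => u t - v t).
  by rewrite Series_minus //; lra.
apply: Series_ge_partial Hw _ => N.
have Hpartial : forall N, - sum_n (fun t => g ^ t * (alpha * INR t + beta)) N
                          <= sum_n (fun t => u t - v t) N.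
  elim=> [|n IH]; first by rewrite !sum_O; have := Hgap 0%nat; lra.
  have Hplus : forall x y : R, plus x y = x + y by [].
  by rewrite !sum_Sn !Hplus; have := Hgap (S n); lra.
by have := discounted_linear_sum_le _ _ _ N Hg Ha Hb; have := Hpartial N; lra.
Qed.

Lemma ret_Series {St Ac : countType} {rho0 : St -> R} {gamma rmax : R}
    {r : St -> Ac -> R} {pi : St -> Ac -> R} {q : St -> Ac -> St -> R} :
  is_dist rho0 -> 0 < gamma < 1 -> (forall s a, Rabs (r s a) <= rmax) -> 0 <= rmax ->
  is_policy pi -> is_kernel q ->
  ex_series (fun t => gamma ^ t * expect_sa (state_marg rho0 pi q t) pi r) /\
  ret rho0 gamma r pi q = Series (fun t => gamma ^ t * expect_sa (state_marg rho0 pi q t) pi r).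
Proof.
move=> Hrho Hg Hr Hrmax Hpi Hq.
have Hex : ex_series (fun t => gamma ^ t * expect_sa (state_marg rho0 pi q t) pi r).
  apply: (ex_series_discounted _ rmax); first lra.
  move=> t; have Hd := state_marg_subdist t Hrho Hpi Hq.
  by case: (expect_sa_summable rmax Hd Hpi Hrmax Hr) => _ [].
by split=> //; rewrite /ret epsilon_infinite_sum.
Qed.

Lemma ret_gap_le {St Ac : countType} {rho0 : St -> R} {gamma rmax : R}
    {r : St -> Ac -> R} {pi : St -> Ac -> R} {p phat : St -> Ac -> St -> R} alpha beta :
  is_dist rho0 -> 0 < gamma < 1 -> (forall s a, Rabs (r s a) <= rmax) -> 0 <= rmax ->
  is_policy pi -> is_kernel p -> is_kernel phat -> 0 <= alpha -> 0 <= beta ->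
  (forall t, expect_sa (state_marg rho0 pi phat t) pi r - expect_sa (state_marg rho0 pi p t) pi r
             <= alpha * INR t + beta) ->
  ret rho0 gamma r pi phat - ret rho0 gamma r pi p
  <= alpha * gamma / (1 - gamma) ^ 2 + beta / (1 - gamma).
Proof.
move=> Hrho Hg Hr Hrmax Hpi Hp Hph Ha Hb Hgap.
have [Hex ->] := ret_Series Hrho Hg Hr Hrmax Hpi Hp.
have [Hex_hat ->] := ret_Series Hrho Hg Hr Hrmax Hpi Hph.
apply: (Series_gap_le _ _ _ _ _ Hex Hex_hat Hg Ha Hb) => t.
rewrite -Rmult_minus_distr_l; apply: Rmult_le_compat_l (Hgap t).
by apply: pow_le; lra.
Qed.

Lemma expected_reward_gap {St Ac : countType} {rho0 : St -> R} {r : St -> Ac -> R}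
    {p phat : St -> Ac -> St -> R} {piD pi : St -> Ac -> R} {rmax a b : R} t :
  is_dist rho0 -> (forall s a, Rabs (r s a) <= rmax) -> 0 <= rmax ->
  is_kernel p -> is_kernel phat -> is_policy piD -> is_policy pi ->
  (forall t, policy_gap (state_marg rho0 piD p t) pi piD <= a) ->
  (forall t, model_gap (state_marg rho0 piD p t) piD phat p <= b) ->
  expect_sa (state_marg rho0 pi phat t) pi r - expect_sa (state_marg rho0 pi p t) pi r
  <= rmax * ((2 * a + b) * INR t + 2 * a).
Proof.
move=> Hrho Hr Hrmax Hp Hph HpiD Hpi Ha Hb.
have Hself : forall t, model_gap (state_marg rho0 piD p t) piD p p <= 0.
  by move=> t'; rewrite model_gap_self; apply: Rle_refl.
have Dp := state_marg_drift a 0 Hrho Hpi HpiD Hp Hp Ha Hself t.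
have Dph := state_marg_drift a b Hrho Hpi HpiD Hph Hp Ha Hb t.
apply: Rle_trans (expect_sa_gap_via_reference rmax _ _ _
  (state_marg_subdist t Hrho Hpi Hp) (state_marg_subdist t Hrho Hpi Hph)
  (state_marg_subdist t Hrho HpiD Hp) Hpi HpiD Hrmax Hr Dp Dph (Ha t)) _.
by right; ring.
Qed.

Theorem theorem1 (S A : countType) (rho0 : S -> R) (gamma rmax : R)
  (r : S -> A -> R) (p phat : S -> A -> S -> R) (piD pi : S -> A -> R)
  (eps_m eps_pi : R) :
  is_dist rho0 ->
  0 < gamma < 1 ->
  (forall s a, Rabs (r s a) <= rmax) ->
  is_kernel p -> is_kernel phat ->
  is_policy piD -> is_policy pi ->
  (forall t : nat,
     expect_sa (state_marg rho0 piD p t) piD (fun s a => D_TV (p s a) (phat s a))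
     <= eps_m) ->
  (forall s : S, D_TV (piD s) (pi s) <= eps_pi) ->
  ret rho0 gamma r pi p >=
    ret rho0 gamma r pi phat
    - 2 * gamma * rmax * (eps_m + 2 * eps_pi) / (1 - gamma) ^ 2
    - 4 * rmax * eps_pi / (1 - gamma).
Proof.
move=> Hrho Hg Hr Hp Hph HpiD Hpi Hm Hpe.
(* The hypotheses force the bounds rmax, eps_pi, eps_m to be nonnegative. *)
have [s0] := dist_inhabited Hrho; have [a0] := dist_inhabited (HpiD s0).
have Hrmax : 0 <= rmax := Rle_trans _ _ _ (Rabs_pos _) (Hr s0 a0).
have Hepi : 0 <= eps_pi := Rle_trans _ _ _ (proj1 (D_TV_bounds (HpiD s0) (Hpi s0))) (Hpe s0).
have Hem : 0 <= eps_m := Rle_trans _ _ _ (expect_sa_nonneg 1 (state_marg_subdist 0 Hrho HpiD Hp)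
  HpiD Rle_0_1 (fun s a => D_TV_bounds (Hp s a) (Hph s a))) (Hm 0%nat).
(* Along the data-collecting chain: policy gap <= 2 eps_pi, model gap <= 2 eps_m. *)
have Hpol : forall t, policy_gap (state_marg rho0 piD p t) pi piD <= 2 * eps_pi.
  move=> t; apply: policy_gap_le (state_marg_subdist t Hrho HpiD Hp) Hpi HpiD _ _; first lra.
  by move=> s; rewrite l1dist_D_TV; have := Hpe s; lra.
have Hmod : forall t, model_gap (state_marg rho0 piD p t) piD phat p <= 2 * eps_m.
  move=> t; rewrite (model_gap_expect (state_marg_subdist t Hrho HpiD Hp) HpiD Hph Hp).
  by have := Hm t; lra.
have Hstep : forall t, expect_sa (state_marg rho0 pi phat t) pi r
    - expect_sa (state_marg rho0 pi p t) pi r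
    <= 2 * rmax * (eps_m + 2 * eps_pi) * INR t + 4 * rmax * eps_pi.
  move=> t; apply: Rle_trans (expected_reward_gap t Hrho Hr Hrmax Hp Hph HpiD Hpi Hpol Hmod) _.
  by right; ring.
have Halpha : 0 <= 2 * rmax * (eps_m + 2 * eps_pi) by nra.
have Hbeta : 0 <= 4 * rmax * eps_pi by nra.
have := ret_gap_le _ _ Hrho Hg Hr Hrmax Hpi Hp Hph Halpha Hbeta Hstep.
by rewrite /Rdiv; lra.
Qed.
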